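(* Let $k$ be a field and $p$ a prime different from $\operatorname{char}k$. Assume $k^*\neq (k^* )^p$, and, if $\mu_p\subset k$, assume that $k^*/(k^* )^p$ is not cyclic. Then for every finite cyclic extension $K/k$ and every $s\in\mathbb{N}$ there exists $a\in k^*$ such that $x^{p^s}-a$ is irreducible over $K$.
   Context: $k^*$ is the multiplicative group of $k$, $(k^* )^p$ the subgroup of $p$-th powers. $\mu_p\subset k$ means $k$ contains all $p$-th roots of unity of its algebraic closure. *)

From HB Require Import structures.
From mathcomp Require Import all_boot all_order all_fingroup all_algebra all_solvable all_field.
Set Implicit Arguments. Unset Strict Implicit. Unset Printing Implicit Defensive.
Import GRing.Theory.
Local Open Scope ring_scope.

Definition not_all_pth_powers (k : fieldType) (p : nat) : Prop :=
  exists x : k, x != 0 /\ forall y : k, y ^+ p != x.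

Definition contains_pth_roots_of_unity (k : fieldType) (p : nat) : Prop :=
  exists s : seq k, ('X^p - 1 : {poly k}) = \prod_(z <- s) ('X - z%:P).

Definition units_mod_pth_powers_cyclic (k : fieldType) (p : nat) : Prop :=
  exists g : k, g != 0 /\
    forall x : k, x != 0 -> exists (n : nat) (y : k), y != 0 /\ x = g ^+ n * y ^+ p.

From HB Require Import structures.
From mathcomp Require Import all_boot all_order all_fingroup all_algebra.
From mathcomp Require Import all_solvable all_field.
From Stdlib Require Import Classical.
From mathcomp Require Import ring.

(* Capelli: X^(p^s) - a is irreducible as soon as a is not a p-th power and, for
   p = 2, not of the form -4 b^4.  Adjoin the successive p-th roots one at a time:
   the determinant of a companion matrix (a norm) shows that a p-th root of a
   non-p-th power has degree p and is not itself a p-th power in the bigger field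
   (for p = 2 this is where the -4 b^4 condition is needed, and it propagates).
   It remains to find such an a in k^*.  Let sigma generate Gal(K/k) and suppose
   every element of k^* is a p-th power in K.  For a non-p-th power x0 of k with
   b0^p = x0, z = sigma(b0)/b0 is a primitive p-th root of unity.  If sigma moves z,
   then b0/z^m is sigma-fixed for a suitable m, so x0 is a p-th power in k; if sigma
   fixes z, then mu_p is in k and b/b0^e is sigma-fixed for every root b of any x in
   k^*, so the class of x0 generates k^* modulo p-th powers.  For p = 2 one
   distinguishes whether -1 is a square in K. *)

Set Implicit Arguments.
Unset Strict Implicit.
Unset Printing Implicit Defensive.

Import GRing.Theory.
Local Open Scope ring_scope.

Lemma algX (R : pzRingType) (A : lalgType R) (a : R) n :
  (a ^+ n)%:A = a%:A ^+ n :> A.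
Proof. exact: (rmorphXn (in_alg A)). Qed.

Lemma det_expmx (R : comNzRingType) n (A : 'M[R]_n.+1) e :
  \det (A ^+ e) = \det A ^+ e.
Proof.
elim: e => [|e IHe]; first by rewrite !expr0 det1.
by rewrite !exprS det_mulmx IHe.
Qed.

Lemma horner_mx_char_poly_dvdp (R : fieldType) n (A : 'M[R]_n.+1) (u v : {poly R}) :
  char_poly A %| u - v -> horner_mx A u = horner_mx A v.
Proof.
case/dvdpP=> q Dq; apply/eqP; rewrite -subr_eq0 -rmorphB Dq rmorphM /=.
by rewrite Cayley_Hamilton mulr0.
Qed.

Lemma companion_char_poly (R : comNzRingType) (m : {poly R}) :
  m \is monic -> (1 < size m)%N ->
  exists n (A : 'M[R]_n.+1), char_poly A = m /\ n.+1 = (size m).-1.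
Proof.
move=> mon_m m_gt1; have := companionmxK mon_m; move: (companionmx m).
have : (0 < (size m).-1)%N by rewrite -ltnS prednK // ltnW.
by case: (size m).-1 => // n _ A Dm; exists n, A.
Qed.

(* [\det A] is the norm of a root of [char_poly A]. *)
Lemma dvdp_XnsubC_pow (R : fieldType) (m : {poly R}) (c : R) e :
  m \is monic -> (1 < size m)%N -> m %| 'X^e - c%:P ->
  exists t : R, t ^+ e = c ^+ (size m).-1.
Proof.
move=> mon_m m_gt1; have [n [A [DA <-]]] := companion_char_poly mon_m m_gt1.
rewrite -DA => /horner_mx_char_poly_dvdp/(congr1 determinant).
rewrite rmorphXn /= horner_mx_X horner_mx_C det_expmx det_scalar => detA.
by exists (\det A).
Qed.

Lemma XnsubC_dvdp_pow_subX (R : fieldType) (c : R) (u : {poly R}) e :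
  odd e -> 'X^e - c%:P %| u ^+ e - 'X -> exists t : R, t ^+ e = c.
Proof.
move=> odd_e; have e_gt0 : (0 < e)%N by case: e odd_e.
have m_gt1 : (1 < size ('X^e - c%:P)%R)%N by rewrite size_XnsubC.
have [n [A [DA]]] := companion_char_poly (monicXnsubC c e_gt0) m_gt1.
rewrite size_XnsubC //= => Dn; rewrite -DA.
move=> /horner_mx_char_poly_dvdp/(congr1 determinant).
rewrite rmorphXn /= horner_mx_X det_expmx => detAu.
exists (\det (horner_mx A u)); rewrite detAu.
have := char_poly_det A; rewrite DA coefB coefXn coefC eq_sym eqn0Ngt e_gt0.
have sgn : (-1) ^+ n.+1 = -1 :> R by rewrite -signr_odd Dn odd_e.
by rewrite sub0r sgn mulN1r => /oppr_inj.
Qed.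

Lemma root_of_coprime_pow (R : fieldType) (c t : R) d p :
  c != 0 -> (0 < d)%N -> coprime d p -> t ^+ p = c ^+ d ->
  exists b : R, b ^+ p = c.
Proof.
move=> c0 d_gt0 co_dp tp; case: (egcdnP p d_gt0) => km kn Dkm _.
exists (t ^+ km / c ^+ kn); rewrite exprMn exprVn -!exprM mulnC exprM tp.
rewrite -exprM mulnC Dkm (eqP co_dp) exprD expr1 mulrAC mulfV ?mul1r //.
by rewrite expf_neq0.
Qed.

Section RootsInExtension.

Variables (F0 : fieldType) (L : fieldExtType F0).

Lemma minPoly_dvdp_XnsubC (K : {subfield L}) (g c : L) n :
  c \in K -> g ^+ n = c -> minPoly K g %| 'X^n - c%:P.
Proof.
move=> cK gn; apply: minPoly_dvdp; first by rewrite polyOverXnsubC.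
by rewrite /root !hornerE gn subrr.
Qed.

(* Writing d = x0 + x1 g and comparing coefficients of d^2 = e g over K gives
   x0^2 + x1^2 c = 0 and 2 x0 x1 = e, whence c = -4 x0^4. *)
Lemma neg4_pow4_of_adjoin_sqrt_sqrt (K : {subfield L}) (g c e d : L) :
  c \in K -> g ^+ 2 = c -> g \notin K -> e ^+ 2 = 1 ->
  d \in <<K; g>>%VS -> d ^+ 2 = e * g -> exists2 x, x \in K & c = - 4 * x ^+ 4.
Proof.
move=> cK gc gNK e2 dKg de.
have deg_g : (adjoin_degree K g <= 2)%N.
  rewrite -ltnS -size_minPoly -(size_XnsubC c (isT : (0 < 2)%N)).
  by rewrite dvdp_leq ?monic_neq0 ?monicXnsubC ?minPoly_dvdp_XnsubC.
set f := Fadjoin_poly K g d.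
have size_f : (size f <= 2)%N := leq_trans (size_Fadjoin_poly K g d) deg_g.
have x0K : f`_0 \in K := polyOverP (Fadjoin_polyOver K g d) 0.
have x1K : f`_1 \in K := polyOverP (Fadjoin_polyOver K g d) 1.
have := Fadjoin_poly_eq dKg; rewrite -/f (horner_coef_wide _ size_f).
rewrite !big_ord_recl big_ord0 /=.
move: x0K x1K; set x0 := f`_0; set x1 := f`_1 => x0K x1K Dd.
have eK : e \in K.
  by move/eqP: e2; rewrite sqrf_eq1 => /orP[] /eqP->; rewrite ?rpred1 ?rpredN1.
have Dsq : (x0 ^+ 2 + x1 ^+ 2 * c) + (2 * x0 * x1 - e) * g = 0.
  have : d ^+ 2 - e * g = 0 by rewrite de subrr.
  by rewrite -Dd -gc => <-; rewrite /bump /=; ring.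
have v0 : 2 * x0 * x1 - e = 0.
  apply/eqP; apply: contraNT gNK => v_neq0.
  have -> : g = - (x0 ^+ 2 + x1 ^+ 2 * c) / (2 * x0 * x1 - e).
    apply: (mulIf v_neq0); rewrite mulfVK //; apply/eqP.
    by rewrite eq_sym eqr_oppLR -addr_eq0 [g * _]mulrC Dsq.
  by rewrite rpred_div ?rpredN ?rpredB ?rpredD ?rpredM ?rpredX ?rpred_nat.
exists x0 => //; apply/eqP; rewrite mulNr -addr_eq0.
have x0x1 : 2 * x0 * x1 = e by apply/eqP; rewrite -subr_eq0 v0.
rewrite v0 mul0r addr0 in Dsq.
have -> : c + 4 * x0 ^+ 4 = (2 * x0 * x1) ^+ 2 * c + 4 * x0 ^+ 4.
  by rewrite x0x1 e2 mul1r.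
have -> : (2 * x0 * x1) ^+ 2 * c + 4 * x0 ^+ 4 = 4 * x0 ^+ 2 * (x0 ^+ 2 + x1 ^+ 2 * c).
  by ring.
by rewrite Dsq mulr0.
Qed.

Section PrimeRoots.

Variable p : nat.
Hypothesis p_pr : prime p.

Let p_gt0 : (0 < p)%N. Proof. exact: prime_gt0. Qed.

Lemma adjoin_degree_prime_root (K : {subfield L}) (g c : L) :
  c \in K -> g ^+ p = c -> (forall b, b \in K -> b ^+ p != c) ->
  adjoin_degree K g = p.
Proof.
move=> cK gp c_npow; set d := adjoin_degree K g.
have c0 : c != 0.
  by apply: contraNneq (c_npow 0 (rpred0 K)) => ->; rewrite expr0n gtn_eqF.
have dvd_m := minPoly_dvdp_XnsubC cK gp.
have d_le_p : (d <= p)%N.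
  by rewrite -ltnS -(size_XnsubC c p_gt0) -size_minPoly dvdp_leq ?monic_neq0 ?monicXnsubC.
have [d_lt_p|] := ltnP d p; last by move=> p_le_d; apply/eqP; rewrite eqn_leq d_le_p.
have /polyOver_subvs[m Dm] := minPolyOver K g.
have Dc : vsval (vsproj K c) = c := vsprojK cK.
have dvd_m' : m %| 'X^p - (vsproj K c)%:P.
  by rewrite -(dvdp_map vsval) -Dm rmorphB /= map_polyXn map_polyC /= Dc.
have mon_m : m \is monic by rewrite -(map_monic vsval) -Dm monic_minPoly.
have size_m : size m = d.+1 by rewrite -(size_map_poly vsval) -Dm size_minPoly.
have d_gt0 : (0 < d)%N by [].
have [|t] := dvdp_XnsubC_pow mon_m _ dvd_m'; first by rewrite size_m ltnS.
rewrite size_m /= => tp.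
have co_dp : coprime d p by rewrite coprime_sym prime_coprime ?gtnNdvd.
have [|b bp] := root_of_coprime_pow _ d_gt0 co_dp tp.
  by rewrite -(inj_eq val_inj) /= Dc.
by have := c_npow (vsval b) (subvsP b); rewrite -rmorphXn bp /= Dc eqxx.
Qed.

Lemma minPoly_prime_root (K : {subfield L}) (g c : L) :
  c \in K -> g ^+ p = c -> (forall b, b \in K -> b ^+ p != c) ->
  minPoly K g = 'X^p - c%:P.
Proof.
move=> cK gp c_npow; apply/eqP.
rewrite -eqp_monic ?monic_minPoly ?monicXnsubC // -dvdp_size_eqp.
  by rewrite size_minPoly size_XnsubC // (adjoin_degree_prime_root cK gp c_npow).
exact: minPoly_dvdp_XnsubC.
Qed.

Lemma prime_root_not_pow_odd (K : {subfield L}) (g c : L) :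
  odd p -> c \in K -> g ^+ p = c -> (forall b, b \in K -> b ^+ p != c) ->
  forall d, d \in <<K; g>>%VS -> d ^+ p != g.
Proof.
move=> odd_p cK gp c_npow d dKg; apply/eqP => dp.
have /polyOver_subvs[f Df] := Fadjoin_polyOver K g d.
have Dc : vsval (vsproj K c) = c := vsprojK cK.
have : minPoly K g %| (Fadjoin_poly K g d) ^+ p - 'X.
  apply: minPoly_dvdp; first by rewrite rpredB ?rpredX ?polyOverX ?Fadjoin_polyOver.
  by rewrite /root !hornerE (Fadjoin_poly_eq dKg) dp subrr.
rewrite (minPoly_prime_root cK gp c_npow) Df => dvd_L.
have : 'X^p - (vsproj K c)%:P %| f ^+ p - 'X.
  by rewrite -(dvdp_map vsval) !rmorphB !rmorphXn /= map_polyX map_polyC /= Dc.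
case/(XnsubC_dvdp_pow_subX odd_p) => t tp.
by have := c_npow (vsval t) (subvsP t); rewrite -rmorphXn tp /= Dc eqxx.
Qed.

Definition capelli_condition (K : {vspace L}) (c : L) : Prop :=
  (forall b, b \in K -> b ^+ p != c) /\
  (p = 2 -> forall b, b \in K -> c != - 4 * b ^+ 4).

Lemma capelli_condition_adjoin (K : {subfield L}) (g c : L) :
  c \in K -> g ^+ p = c -> capelli_condition K c -> capelli_condition <<K; g>> g.
Proof.
move=> cK gp [c_npow c_neg4].
have gNK : g \notin K.
  by rewrite -adjoin_deg_eq1 (adjoin_degree_prime_root cK gp c_npow) gtn_eqF ?prime_gt1.
have [p2|p_neq2] := eqVneq p 2; last first.
  have odd_p : odd p by apply: contraR p_neq2 => /(prime_oddPn p_pr)->.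
  split; first exact: prime_root_not_pow_odd odd_p cK gp c_npow.
  by move=> /eqP; rewrite (negPf p_neq2).
rewrite /capelli_condition p2 in gp *; split=> [b bKg | _ b bKg]; apply/eqP => Db.
  have [|x xK Dc] := neg4_pow4_of_adjoin_sqrt_sqrt cK gp gNK (expr1n _ 2) bKg.
    by rewrite Db mul1r.
  by have /eqP[] := c_neg4 p2 x xK.
have e2 : (-1 : L) ^+ 2 = 1 by rewrite sqrrN expr1n.
have [||x xK Dc] := neg4_pow4_of_adjoin_sqrt_sqrt cK gp gNK e2 (d := 2 * b ^+ 2).
- by rewrite rpredM ?rpredX ?rpred_nat.
- by rewrite Db; ring.
by have /eqP[] := c_neg4 p2 x xK.
Qed.

Lemma adjoin_degree_prime_power_root s (K : {subfield L}) (x c : L) :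
  c \in K -> x ^+ (p ^ s) = c -> capelli_condition K c ->
  adjoin_degree K x = (p ^ s)%N.
Proof.
elim: s K c => [|s IHs] K c cK xc cond_c.
  by rewrite expn0 expr1 in xc; apply/eqP; rewrite adjoin_deg_eq1 xc.
set g := x ^+ (p ^ s); have gp : g ^+ p = c by rewrite -exprM -expnSr.
have [c_npow _] := cond_c.
have deg_g := adjoin_degree_prime_root cK gp c_npow.
have deg_x := IHs <<K; g>>%AS g (memv_adjoin K g) erefl
  (capelli_condition_adjoin cK gp cond_c).
have Kgx : <<<<K; g>>; x>>%VS = <<K; x>>%VS.
  apply/eqP; rewrite eqEsubv; apply/andP; split; apply/FadjoinP; split.
  - by apply/FadjoinP; rewrite subv_adjoin rpredX ?memv_adjoin.
  - exact: memv_adjoin.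
  - exact: subv_trans (subv_adjoin K g) (subv_adjoin _ x).
  - exact: memv_adjoin.
have := dim_Fadjoin <<K; g>>%AS x; rewrite Kgx !dim_Fadjoin deg_x deg_g mulnA.
by move/eqP; rewrite eqn_pmul2r ?adim_gt0 // expnSr => /eqP.
Qed.

End PrimeRoots.

End RootsInExtension.

Lemma irreducible_dvdp_exists (F : fieldType) (q : {poly F}) :
  (1 < size q)%N -> exists2 f : {poly F}, irreducible_poly f & f %| q.
Proof.
have [n] := ubnP (size q); elim: n q => // n IHn q size_q q_gt1.
have [irr_q|red_q] := classic (irreducible_poly q); first by exists q.
have [f /and3P[f_neq1 f_q f_nassoc]] :
    exists f : {poly F}, [&& size f != 1%N, f %| q & ~~ (f %= q)].
  apply: NNPP => no_f; apply: red_q; split=> // f f_neq1 f_q.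
  by apply/negPn/negP => f_nassoc; apply: no_f; exists f; apply/and3P.
have q_neq0 : q != 0 by rewrite -size_poly_gt0 ltnW.
have f_neq0 : f != 0 by apply: contraNneq q_neq0 => f0; rewrite -dvd0p -f0.
have lt_fq : (size f < size q)%N.
  by rewrite ltn_neqAle dvdp_leq // andbT; apply: contraNN f_nassoc; rewrite -dvdp_size_eqp.
have [||g irr_g g_f] := IHn f (leq_trans lt_fq _); first by rewrite -ltnS.
  by rewrite ltn_neqAle eq_sym f_neq1 size_poly_gt0.
by exists g => //; apply: dvdp_trans f_q.
Qed.

Lemma irreducible_XnsubC (F : fieldType) (p s : nat) (c : F) : prime p ->
  (forall b : F, b ^+ p != c) -> (p = 2 -> forall b : F, c != - 4 * b ^+ 4) ->
  irreducible_poly ('X^(p ^ s) - c%:P).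
Proof.
move=> p_pr c_npow c_neg4; set n := (p ^ s)%N.
have n_gt0 : (0 < n)%N by rewrite expn_gt0 prime_gt0.
have size_P : size ('X^n - c%:P) = n.+1 := size_XnsubC c n_gt0.
split=> [|q q_neq1 q_P]; first by rewrite size_P ltnS.
have q_neq0 : q != 0.
  by apply: contraTneq q_P => ->; rewrite dvd0p monic_neq0 ?monicXnsubC.
have [|f irr_f f_q] := irreducible_dvdp_exists (q := q).
  by rewrite ltn_neqAle eq_sym q_neq1 size_poly_gt0.
have [E _ [z fz _]] := irredp_FAdjoin irr_f.
have zn : z ^+ n = c%:A.
  have : root (map_poly (in_alg E) ('X^n - c%:P)) z.
    by apply: root_dvdp fz; rewrite dvdp_map (dvdp_trans f_q).
  by rewrite rmorphB /= map_polyXn map_polyC /root !hornerE subr_eq0 => /eqP.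
have cond_c : capelli_condition p 1%VS (c%:A : E).
  split=> [b /vlineP[k ->] | p2 b /vlineP[k ->]].
    by rewrite -algX (inj_eq (fmorph_inj (in_alg E))) c_npow.
  have -> : - 4 * (k%:A : E) ^+ 4 = (- 4 * k ^+ 4)%:A.
    by rewrite -algX -[RHS]/(in_alg E (- 4 * k ^+ 4)) rmorphM rmorphN rmorph_nat.
  by rewrite (inj_eq (fmorph_inj (in_alg E))) c_neg4.
have deg_z : adjoin_degree 1%AS z = n :=
  adjoin_degree_prime_power_root p_pr (rpredZ c (mem1v _)) zn cond_c.
have size_f : (n.+1 <= size f)%N.
  rewrite -deg_z -size_minPoly -(size_map_poly (in_alg E)) dvdp_leq ?minPoly_dvdp //.
    by rewrite map_poly_eq0 irredp_neq0.
  exact: alg_polyOver.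
rewrite -dvdp_size_eqp // eqn_leq dvdp_leq ?monic_neq0 ?monicXnsubC //= size_P.
exact: leq_trans size_f (dvdp_leq q_neq0 f_q).
Qed.

Lemma neg4_pow4 (R : comPzRingType) (b : R) : - 4 * b ^+ 4 = - (2 * b ^+ 2) ^+ 2.
Proof. by ring. Qed.

Lemma two_neq0_pchar (R : nzRingType) : 2 \notin [pchar R] -> 2 != 0 :> R.
Proof. by rewrite inE /= => ->. Qed.

Lemma prime_root1_primitive (R : idomainType) (p : nat) (z : R) :
  prime p -> z ^+ p = 1 -> z != 1 -> p.-primitive_root z.
Proof.
move=> p_pr zp z_neq1; have [m prim_z m_dvd_p] := prim_order_exists (prime_gt0 p_pr) zp.
case/primeP: p_pr => _ /(_ m m_dvd_p)/orP[/eqP m1 | /eqP <- //].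
by move: (prim_expr_order prim_z); rewrite m1 expr1 => /eqP; rewrite (negPf z_neq1).
Qed.

Lemma primitive_root_contains_roots_of_unity (F : fieldType) (p : nat) (z : F) :
  p.-primitive_root z -> contains_pth_roots_of_unity F p.
Proof.
move=> prim_z; exists [seq z ^+ i | i <- index_iota 0 p].
by rewrite big_map -(factor_Xn_sub_1 prim_z).
Qed.

Lemma gal_cycle_fixed (k : fieldType) (K : splittingFieldType k) (g : gal_of {:K}) :
  galois 1 {:K} -> 'Gal({:K} / 1)%g = <[g]>%g ->
  forall x : K, g x = x <-> exists t : k, x = t%:A.
Proof.
move=> galK gen_g x; split=> [gx|[t ->]]; last exact: rmorph_alg.
have : x \in fixedField 'Gal({:K} / 1)%g.
  apply/fixedFieldP; rewrite ?memvf // gen_g => _ /cycleP[i ->].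
  by elim: i => [|i IHi]; rewrite ?expg0 ?gal_id // expgS galM ?memvf // gx.
by rewrite (galois_fixedField galK) => /vlineP[t ->]; exists t.
Qed.

Lemma units_mod_squares_cyclic (k : fieldType) (K : fieldExtType k) :
  (forall d : k, d != 0 -> (exists e : K, e ^+ 2 = d%:A) -> exists y : k, y ^+ 2 = d) ->
  (forall x : k, x != 0 ->
     (exists b : K, b ^+ 2 = x%:A) \/ (exists b : K, x%:A = - 4 * b ^+ 4)) ->
  units_mod_pth_powers_cyclic k 2.
Proof.
move=> sqrt_descends square_or_neg4; exists (-1); split=> [|x x_neq0].
  by rewrite oppr_eq0 oner_eq0.
have y_neq0 (y z : k) : z != 0 -> y ^+ 2 = z -> y != 0.
  by move=> z_neq0 yz; apply: contraNneq z_neq0 => y0; rewrite -yz y0 expr0n.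
case: (square_or_neg4 x x_neq0) => [[b bx] | [b bx]].
  have [y yx] := sqrt_descends x x_neq0 (ex_intro _ b bx).
  by exists 0%N, y; rewrite expr0 mul1r yx (y_neq0 y x).
have [||y yx] := sqrt_descends (- x); first by rewrite oppr_eq0.
  by exists (2 * b ^+ 2); rewrite scaleNr bx neg4_pow4 opprK.
by exists 1%N, y; rewrite expr1 mulN1r yx opprK (y_neq0 y (- x)) ?oppr_eq0.
Qed.

Section Kummer.

Variables (k : fieldType) (K : fieldExtType k) (sigma : {rmorphism K -> K}).
Hypothesis sigma_fixed : forall x : K, sigma x = x <-> exists t : k, x = t%:A.

Lemma sigma_alg (t : k) : sigma t%:A = t%:A.
Proof. by apply/sigma_fixed; exists t. Qed.

Section PrimeExponent.

Variable p : nat.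
Hypothesis p_pr : prime p.

Lemma sigma_ratio_root (b : K) (a : k) : b != 0 -> b ^+ p = a%:A ->
  (sigma b / b) ^+ p = 1.
Proof.
move=> b_neq0 bp; rewrite exprMn exprVn -rmorphXn bp sigma_alg -bp.
by rewrite divff // expf_neq0.
Qed.

Lemma sigma_ratio_unfixed_pow (b : K) (a : k) : b != 0 -> b ^+ p = a%:A ->
  sigma (sigma b / b) != sigma b / b -> exists t : k, t ^+ p = a.
Proof.
set z := sigma b / b => b_neq0 bp sz_neq_z.
have zp : z ^+ p = 1 := sigma_ratio_root b_neq0 bp.
have z_neq0 : z != 0 by rewrite mulf_neq0 ?invr_eq0 ?fmorph_eq0.
have wp : (sigma z / z) ^+ p = 1.
  by apply: (sigma_ratio_root (a := 1)); rewrite ?scale1r.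
set w := sigma z / z in wp; have Dsz : sigma z = w * z by rewrite divfK.
have prim_w : p.-primitive_root w.
  by apply: prime_root1_primitive; rewrite // -(inj_eq (mulIf z_neq0)) mul1r -Dsz.
have [m Dz] := prim_rootP prim_w zp.
have Dszm : sigma (z ^+ m) = z * z ^+ m by rewrite rmorphXn Dsz exprMn -Dz.
have Dsb : sigma b = z * b by rewrite divfK.
have [t Dt] : exists t : k, b / z ^+ m = t%:A.
  by apply/sigma_fixed; rewrite fmorph_div Dsb Dszm -mulf_div divff // mul1r.
exists t; apply: (fmorph_inj (in_alg K)); rewrite /= algX -Dt -[RHS]bp.
by rewrite exprMn exprVn -exprM mulnC exprM zp expr1n invr1 mulr1.
Qed.

Lemma pth_root_neq0 (b : K) (a : k) : a != 0 -> b ^+ p = a%:A -> b != 0.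
Proof.
move=> a_neq0 bp; have : b ^+ p != 0 by rewrite bp scaler_eq0 oner_eq0 orbF.
by apply: contraNneq => ->; rewrite expr0n gtn_eqF ?prime_gt0.
Qed.

Lemma sigma_ratio_fixed_pow (b0 b : K) (x0 x : k) :
  b0 != 0 -> b0 ^+ p = x0%:A -> p.-primitive_root (sigma b0 / b0) ->
  sigma (sigma b0 / b0) = sigma b0 / b0 -> x != 0 -> b ^+ p = x%:A ->
  exists (n : nat) (y : k), y != 0 /\ x = x0 ^+ n * y ^+ p.
Proof.
set z := sigma b0 / b0 => b0_neq0 b0p prim_z sz x_neq0 bp.
have b_neq0 := pth_root_neq0 x_neq0 bp.
have [e De] := prim_rootP prim_z (sigma_ratio_root b_neq0 bp).
have Dsb : sigma b = z ^+ e * b by rewrite -De divfK.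
have Dsb0 : sigma b0 = z * b0 by rewrite divfK.
have [t Dt] : exists t : k, b / b0 ^+ e = t%:A.
  apply/sigma_fixed; rewrite fmorph_div rmorphXn Dsb0 exprMn Dsb.
  by rewrite -mulf_div divff ?mul1r // expf_neq0 // mulf_neq0 ?invr_eq0 ?fmorph_eq0.
have t_neq0 : t != 0.
  apply: contraNneq b_neq0 => t0.
  by rewrite -(divfK (expf_neq0 e b0_neq0) b) Dt t0 scale0r mul0r.
exists e, t; split => //; apply: (fmorph_inj (in_alg K)); rewrite /= -bp.
rewrite -[b](divfK (expf_neq0 e b0_neq0)) Dt exprMn -exprM mulnC exprM b0p.
by rewrite -[RHS]/(in_alg K _) rmorphM /= !algX mulrC.
Qed.

Lemma all_pth_roots_cyclic (x0 : k) :
  x0 != 0 -> (forall y : k, y ^+ p != x0) ->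
  (forall a : k, a != 0 -> exists b : K, b ^+ p = a%:A) ->
  contains_pth_roots_of_unity k p /\ units_mod_pth_powers_cyclic k p.
Proof.
move=> x0_neq0 x0_npow roots; have [b0 b0p] := roots x0 x0_neq0.
have b0_neq0 := pth_root_neq0 x0_neq0 b0p.
set z := sigma b0 / b0; have zp : z ^+ p = 1 := sigma_ratio_root b0_neq0 b0p.
have [sz|sz_neq_z] := eqVneq (sigma z) z; last first.
  by have [t tp] := sigma_ratio_unfixed_pow b0_neq0 b0p sz_neq_z; case/eqP: (x0_npow t).
have z_neq1 : z != 1.
  apply/eqP => z1; have [t Dt] : exists t : k, b0 = t%:A.
    by apply/sigma_fixed; rewrite -(divfK b0_neq0 (sigma b0)) -/z z1 mul1r.
  case/eqP: (x0_npow t); apply: (fmorph_inj (in_alg K)).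
  by rewrite /= -b0p Dt algX.
have prim_z : p.-primitive_root z := prime_root1_primitive p_pr zp z_neq1.
have [zeta Dz] := (sigma_fixed z).1 sz.
have prim_zeta : p.-primitive_root zeta.
  by rewrite -(fmorph_primitive_root (in_alg K)) /= -Dz.
split; first exact: primitive_root_contains_roots_of_unity prim_zeta.
exists x0; split=> // x x_neq0; have [b bp] := roots x x_neq0.
exact: sigma_ratio_fixed_pow b0_neq0 b0p prim_z sz x_neq0 bp.
Qed.

Lemma exists_not_pth_power :
  not_all_pth_powers k p ->
  (contains_pth_roots_of_unity k p -> ~ units_mod_pth_powers_cyclic k p) ->
  exists a : k, a != 0 /\ forall b : K, b ^+ p != a%:A.
Proof.
move=> [x0 [x0_neq0 x0_npow]] not_cyclic; apply: NNPP => no_a.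
have roots (a : k) : a != 0 -> exists b : K, b ^+ p = a%:A.
  move=> a_neq0; apply: NNPP => no_b; apply: no_a; exists a; split=> // b.
  by apply/eqP => bp; apply: no_b; exists b.
by have [] := all_pth_roots_cyclic x0_neq0 x0_npow roots.
Qed.

End PrimeExponent.

Lemma capelli_square_of_split_nonsquare (d : k) (e : K) :
  2 \notin [pchar k] -> (forall i : K, i ^+ 2 != -1) ->
  d != 0 -> (forall y : k, y ^+ 2 != d) -> e ^+ 2 = d%:A ->
  (forall b : K, b ^+ 2 != (- d)%:A) /\ (forall b : K, (- d)%:A != - 4 * b ^+ 4).
Proof.
move=> char2 no_i d_neq0 d_nsq e2.
have e_neq0 : e != 0 := pth_root_neq0 (p := 2) isT d_neq0 e2.
have two_neq0 : 2 != 0 :> K.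
  by rewrite -(scaler_nat 2 (1 : K)) -in_algE fmorph_eq0 two_neq0_pchar.
split=> b; apply/eqP => Db.
  have /eqP[] := no_i (b / e).
  by rewrite exprMn exprVn Db e2 scaleNr mulNr divff // scaler_eq0 oner_eq0 orbF.
set D := 2 * b ^+ 2.
have D2 : D ^+ 2 = d%:A by apply: oppr_inj; rewrite -neg4_pow4 -Db scaleNr.
have sD2 : sigma D ^+ 2 = D ^+ 2 by rewrite -rmorphXn D2 sigma_alg.
have : (sigma D - D) * (sigma D + D) == 0 by rewrite -subr_sqr sD2 subrr.
rewrite mulf_eq0 => /orP[|/eqP sD].
  rewrite subr_eq0 => /eqP/sigma_fixed[t Dt]; have /eqP[] := d_nsq t.
  by apply: (fmorph_inj (in_alg K)); rewrite /= -D2 Dt algX.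
have b_neq0 : b != 0.
  apply: contraNneq (pth_root_neq0 (p := 2) isT d_neq0 D2) => b0.
  by rewrite /D b0 expr0n mulr0.
have sb2 : sigma (b ^+ 2) = - b ^+ 2.
  by apply: (mulfI two_neq0); move/eqP: sD; rewrite addr_eq0 rmorphM rmorph_nat mulrN => /eqP.
have /eqP[] := no_i (sigma b / b).
by rewrite exprMn exprVn -rmorphXn sb2 mulNr divff // expf_neq0.
Qed.

Lemma exists_capelli_square :
  2 \notin [pchar k] -> not_all_pth_powers k 2 ->
  (contains_pth_roots_of_unity k 2 -> ~ units_mod_pth_powers_cyclic k 2) ->
  exists a : k, [/\ a != 0, forall b : K, b ^+ 2 != a%:A
                         & forall b : K, a%:A != - 4 * b ^+ 4].
Proof.
move=> char2 nsq not_cyclic.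
have [[i i2] | no_i] := classic (exists i : K, i ^+ 2 = -1).
  have [a [a_neq0 a_nsq]] := exists_not_pth_power (p := 2) isT nsq not_cyclic.
  exists a; split=> // b; apply: contraNneq (a_nsq (i * (2 * b ^+ 2))) => ->.
  by rewrite neg4_pow4 exprMn i2 mulN1r.
have {}no_i (i : K) : i ^+ 2 != -1 by apply/eqP => i2; apply: no_i; exists i.
have [[d [d_neq0 [e e2] d_nsq]] | no_d] := classic (exists d : k,
    [/\ d != 0, exists e : K, e ^+ 2 = d%:A & forall y : k, y ^+ 2 != d]).
  have [] := capelli_square_of_split_nonsquare char2 no_i d_neq0 d_nsq e2.
  by exists (- d); split; rewrite ?oppr_eq0.
apply: NNPP => no_a; apply/not_cyclic/(units_mod_squares_cyclic (K := K)).
- apply: (primitive_root_contains_roots_of_unity (z := -1)).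
  rewrite prime_root1_primitive ?sqrrN ?expr1n // -subr_eq0 -opprD oppr_eq0.
  exact: two_neq0_pchar.
- move=> d d_neq0 d_sq; apply: NNPP => d_nsq; apply: no_d; exists d; split=> // y.
  by apply/eqP => y2; apply: d_nsq; exists y.
- move=> x x_neq0; apply: NNPP => /not_or_and[no_sq no_n4]; apply: no_a; exists x.
  by split=> // b; apply/eqP => Db; [apply: no_sq | apply: no_n4]; exists b.
Qed.

End Kummer.

Theorem mainTheorem4 (k : fieldType) (p : nat) :
  prime p -> p \notin [pchar k] ->
  not_all_pth_powers k p ->
  (contains_pth_roots_of_unity k p -> ~ units_mod_pth_powers_cyclic k p) ->
  forall (K : splittingFieldType k),
    galois 1%VS {:K}%VS -> cyclic 'Gal({:K}%VS / 1%VS) ->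
  forall s : nat,
    exists a : k, a != 0 /\
      irreducible_poly ('X^(p ^ s) - (a%:A)%:P : {poly K}).
Proof.
move=> p_pr p_nchar npow not_cyclic K galK /cyclicP[g gen_g] s.
have g_fixed := gal_cycle_fixed galK gen_g.
have [a [a_neq0 a_npow a_neg4]] : exists a : k, [/\ a != 0,
    forall b : K, b ^+ p != a%:A & p = 2 -> forall b : K, a%:A != - 4 * b ^+ 4].
  have [p2 | p_neq2] := eqVneq p 2.
    rewrite p2 in p_nchar npow not_cyclic *.
    have [a [a_neq0 a_nsq a_neg4]] := exists_capelli_square g_fixed p_nchar npow not_cyclic.
    by exists a; split.
  have [a [a_neq0 a_npow]] := exists_not_pth_power g_fixed p_pr npow not_cyclic.
  by exists a; split=> // /eqP; rewrite (negPf p_neq2).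
by exists a; split; last exact: irreducible_XnsubC.
Qed.
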